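(* Let $(X,d)$ be a compact metric space and $f\colon X\to X$ a continuous map. Assume that for some $k\in\mathbb N$ there are closed sets $Z_1,\dots,Z_k\subseteq X$ with $f(Z_i)\subseteq Z_i$ for each $i$, such that (1) $X=Z_1\cup\dots\cup Z_k$; (2) $Z_i\cap Z_j\ne\emptyset$ for all $i,j$; (3) $f|_{Z_i}\colon Z_i\to Z_i$ is strongly mixing for every $i$. Then $f$ is generically $\varepsilon$-chaotic for every $0<\varepsilon<\frac12\min_i\operatorname{diam} Z_i$.
   Context: A pair $(x,y)\in X^2$ is $\varepsilon$-scrambled if $\liminf_n d(f^n(x),f^n(y))=0$ and $\limsup_n d(f^n(x),f^n(y))>\varepsilon$; $f$ is generically $\varepsilon$-chaotic if the set of $\varepsilon$-scrambled pairs is residual in $X^2$. A map $g\colon Y\to Y$ is strongly mixing if for all nonempty open $U,V\subseteq Y$ there is $n_0$ with $g^n(U)\cap V\ne\emptyset$ for all $n\ge n_0$. *)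

From HB Require Import structures.
From mathcomp Require Import all_boot all_order all_algebra.
From mathcomp Require Import all_classical all_reals all_analysis.
Set Implicit Arguments. Unset Strict Implicit. Unset Printing Implicit Defensive.
Import Order.TTheory GRing.Theory Num.Theory.
Local Open Scope classical_set_scope.
Local Open Scope ring_scope.

Section Defs.
Context {R : realType} {X : metricType R}.

Definition orbit_dist (f : X -> X) (x y : X) : (\bar R)^nat :=
  fun n => (mdist (iter n f x) (iter n f y))%:E.

Definition scrambled (f : X -> X) (eps : R) (x y : X) : Prop :=
  limn_einf (orbit_dist f x y) = 0%E /\ (eps%:E < limn_esup (orbit_dist f x y))%E.

Definition residual {T : topologicalType} (S : set T) : Prop :=
  exists U : (set T)^nat, (forall n, open (U n) /\ dense (U n)) /\
    \bigcap_n U n `<=` S.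

Definition generically_chaotic (f : X -> X) (eps : R) : Prop :=
  residual [set p : X * X | scrambled f eps p.1 p.2].

Definition diam (Z : set X) : R := sup [set mdist x y | x in Z & y in Z].

(** the restriction of f to the invariant set Z is strongly mixing: for all
    nonempty relatively open U = Z ∩ O1, V = Z ∩ O2 of Z, f^n(U) ∩ V ≠ ∅
    for all large n *)
Definition strongly_mixing_on (f : X -> X) (Z : set X) : Prop :=
  forall O1 O2 : set X, open O1 -> open O2 ->
    Z `&` O1 !=set0 -> Z `&` O2 !=set0 ->
    exists n0 : nat, forall n : nat, (n0 <= n)%N ->
      (iter n f @` (Z `&` O1)) `&` (Z `&` O2) !=set0.

End Defs.

From HB Require Import structures.
From mathcomp Require Import all_boot all_order all_algebra.
From mathcomp Require Import all_classical all_reals all_analysis.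
From mathcomp Require Import lra.
Import Order.TTheory GRing.Theory Num.Theory numFieldNormedType.Exports.
Local Open Scope classical_set_scope.
Local Open Scope ring_scope.

(* Since the Z_i cover X, every nonempty open subset of X × X contains a
   product P × Q of open sets with P meeting some Z_i and Q meeting some Z_j.
   Fix z in Z_i ∩ Z_j. Strong mixing on Z_i and on Z_j yields, at one common
   large time m, a point x of P with f^m x near any prescribed point of Z_i
   and a point y of Q with f^m y near any prescribed point of Z_j. Aiming both
   at z makes d(f^m x, f^m y) small; aiming f^m x at a point of Z_i far from z,
   which exists because diam Z_i > 2 eps, makes it larger than eps. Hence the
   pairs that come close, resp. far apart, at some time after n form open dense
   subsets of X × X, and their countable intersection consists of
   eps-scrambled pairs. *)

Lemma exists_between_finite {R : realFieldType} {eps : R} {D : nat -> R} {k} :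
  (forall i, (i < k)%N -> eps < D i) ->
  exists2 e, eps < e & forall i, (i < k)%N -> e < D i.
Proof.
move=> epsD.
have [e [epse eD]] : exists e, eps < e /\ forall i : 'I_k, e < D i.
  apply: (@filter_ex _ (nbhs eps^'+)); near=> e; split.
    by near: e; exact: nbhs_right_gt.
  by near: e; apply: filter_forall => i; exact: nbhs_right_lt (epsD i (ltn_ord i)).
by exists e => // i ik; exact: (eD (Ordinal ik)).
Unshelve. all: by end_near. Qed.

Section EsupEinf.
Context {R : realType}.
Implicit Types (u : (\bar R)^nat) (l : \bar R).
Local Open Scope ereal_scope.

Lemma limn_esup_ge_frequently u l :
  (forall n, exists2 m, (n <= m)%N & l <= u m) -> l <= limn_esup u.
Proof.
move=> lu; rewrite limn_esup_lim; apply: lime_ge; first exact: is_cvg_esups.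
apply: nearW => n; have [m nm lum] := lu n.
by apply: le_trans lum (ereal_sup_ubound _); exists m.
Qed.

Lemma limn_einf_le_frequently u l :
  (forall n, exists2 m, (n <= m)%N & u m <= l) -> limn_einf u <= l.
Proof.
move=> ul; rewrite /limn_einf leeNl; apply: limn_esup_ge_frequently => n.
by have [m nm ulm] := ul n; exists m; rewrite //= leeN2.
Qed.

Lemma limn_einf_ge u l : (forall n, l <= u n) -> l <= limn_einf u.
Proof.
move=> lu; rewrite limn_einf_lim; apply: lime_ge; first exact: is_cvg_einfs.
by apply: nearW => n; apply: le_ereal_inf_tmp => _ [m _ <-].
Qed.

End EsupEinf.

Section MetricOrbits.
Context {R : realType} {X : metricType R}.
Implicit Types (f g : X -> X) (r : R) (n : nat).

Lemma continuous_iter {f} n : continuous f -> continuous (iter n f).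
Proof.
move=> cf; elim: n => [|n IH] x; first exact: cvg_id.
exact: (continuous_comp (IH x) (cf _)).
Qed.

Lemma continuous_mdist_map {g} :
  continuous g -> continuous (fun p : X * X => mdist (g p.1) (g p.2) : R).
Proof.
move=> cg [a b]; apply/cvgrPdist_lt => e e0.
have e20 : 0 < e / 2 by rewrite divr_gt0.
exists (g @^-1` ball (g a) (e / 2), g @^-1` ball (g b) (e / 2)).
  by split; apply: cg; exact: nbhsx_ballx.
move=> [x y] [/= ax yb]; rewrite !ballEmdist /= in ax yb.
have := metric_triangle (g x) (g a) (g y).
have := metric_triangle (g a) (g b) (g y).
have := metric_triangle (g a) (g x) (g b).
have := metric_triangle (g x) (g y) (g b).
by rewrite (metric_sym (g x) (g a)) (metric_sym (g y) (g b)) ltr_distl; lra.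
Qed.

Definition close_after f r n : set (X * X) :=
  [set p | exists2 m, (n <= m)%N & mdist (iter m f p.1) (iter m f p.2) < r].

Definition apart_after f r n : set (X * X) :=
  [set p | exists2 m, (n <= m)%N & r < mdist (iter m f p.1) (iter m f p.2)].

Lemma open_close_after f r n : continuous f -> open (close_after f r n).
Proof.
move=> cf; rewrite openE => p [m nm hm].
apply: filterS (cvgr_lt _ (continuous_mdist_map (continuous_iter m cf) p) _ hm).
by move=> q hq; exists m.
Qed.

Lemma open_apart_after f r n : continuous f -> open (apart_after f r n).
Proof.
move=> cf; rewrite openE => p [m nm hm].
apply: filterS (cvgr_gt _ (continuous_mdist_map (continuous_iter m cf) p) _ hm).
by move=> q hq; exists m.
Qed.

Lemma limn_einf_orbit_dist_eq0 f x y :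
  (forall n, close_after f n.+1%:R^-1 n (x, y)) ->
  limn_einf (orbit_dist f x y) = 0%E.
Proof.
move=> close; apply: le_anti; rewrite limn_einf_ge ?andbT; last first.
  by move=> n; rewrite /orbit_dist lee_fin mdist_ge0.
apply/(lee_addgt0Pr _ 0) => d d0; rewrite add0e.
apply: limn_einf_le_frequently => n.
have [N [Nd nN]] := filter_ex
  (filterI (near_infty_natSinv_lt (PosNum d0)) (nbhs_infty_ge n)).
have [m Nm xym] := close N; exists m; first exact: leq_trans nN Nm.
by rewrite lee_fin ltW // (lt_trans xym).
Qed.

Lemma limn_esup_orbit_dist_ge f r x y :
  (forall n, apart_after f r n (x, y)) ->
  (r%:E <= limn_esup (orbit_dist f x y))%E.
Proof.
move=> apart; apply: limn_esup_ge_frequently => n.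
by have [m nm rxy] := apart n; exists m; rewrite // lee_fin ltW.
Qed.

Lemma strongly_mixing_near {f} {Z A : set X} {c eta} :
  strongly_mixing_on f Z -> open A -> Z `&` A !=set0 -> Z c -> 0 < eta ->
  \forall n \near \oo, exists2 x, A x & mdist c (iter n f x) < eta.
Proof.
move=> mixZ oA ZA Zc eta0.
have [|n0 mixn] := mixZ A (ball c eta)° oA (@open_interior _ _) ZA.
  by exists c; split => //; exact: nbhsx_ballx.
exists n0 => // n /mixn [_ [[x [_ Ax] <-] [_ /interior_subset]]].
by rewrite ballEmdist => cx; exists x.
Qed.

Lemma strongly_mixing_pair {f} {Zi Zj P Q : set X} {c d eta} n :
  strongly_mixing_on f Zi -> strongly_mixing_on f Zj -> open P -> open Q ->
  Zi `&` P !=set0 -> Zj `&` Q !=set0 -> Zi c -> Zj d -> 0 < eta ->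
  exists2 m, (n <= m)%N & exists x y, [/\ P x, Q y,
    mdist c (iter m f x) < eta & mdist d (iter m f y) < eta].
Proof.
move=> mixi mixj oP oQ ZP ZQ Zc Zd eta0.
have [m [[x Px cx] [[y Qy dy] nm]]] := filter_ex (filterI
  (strongly_mixing_near mixi oP ZP Zc eta0)
  (filterI (strongly_mixing_near mixj oQ ZQ Zd eta0) (nbhs_infty_ge n))).
by exists m => //; exists x, y.
Qed.

Lemma exists_far_point {Z : set X} {r} z :
  Z !=set0 -> r < diam Z / 2 -> exists2 c, Z c & r < mdist c z.
Proof.
move=> [w Zw] rZ.
have [_ [a Za [b Zb <-]] ab] : exists2 v, [set mdist x y | x in Z & y in Z] v
    & 2 * r < v.
  apply: sup_gt; first by exists (mdist w w), w => //; exists w.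
  by move: rZ; rewrite /diam; lra.
have := metric_triangle a z b; rewrite (metric_sym z b).
have [az|za] := ltrP r (mdist a z); first by exists a.
by exists b => //; lra.
Qed.

End MetricOrbits.

Lemma dense_cover_rectangles {T : topologicalType} {I : Type} (D : set I)
    (Z : I -> set T) (S : set (T * T)) :
  [set: T] = \bigcup_(i in D) Z i ->
  (forall i j (P Q : set T), D i -> D j -> open P -> open Q ->
     Z i `&` P !=set0 -> Z j `&` Q !=set0 -> (P `*` Q) `&` S !=set0) ->
  dense S.
Proof.
move=> cover meetS O [[a b] Oab] oO.
have [[P Q] [/= Pa Qb] PQO] := oO _ Oab.
have [i Di Zia] : (\bigcup_(i in D) Z i) a by rewrite -cover.
have [j Dj Zjb] : (\bigcup_(i in D) Z i) b by rewrite -cover.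
have [||p [[Pp Qp] Sp]] :=
  meetS i j P° Q° Di Dj (@open_interior _ P) (@open_interior _ Q).
- by exists a.
- by exists b.
by exists p; split => //; apply: PQO; split; exact: interior_subset.
Qed.

Section StronglyMixingCover.
Context {R : realType} {X : metricType R} {f : X -> X} {k : nat}
  {Z : nat -> set X}.
Hypothesis cover : [set: X] = \bigcup_(i in [set i | (i < k)%N]) Z i.
Hypothesis meet : forall i j, (i < k)%N -> (j < k)%N -> Z i `&` Z j !=set0.
Hypothesis mix : forall i, (i < k)%N -> strongly_mixing_on f (Z i).

Lemma dense_close_after r n : 0 < r -> dense (close_after f r n).
Proof.
move=> r0; apply: dense_cover_rectangles cover _ => i j P Q ik jk oP oQ ZP ZQ.
have [z [Ziz Zjz]] := meet _ _ ik jk.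
have r20 : 0 < r / 2 by rewrite divr_gt0.
have [m nm [x [y [Px Qy zx zy]]]] :=
  strongly_mixing_pair n (mix _ ik) (mix _ jk) oP oQ ZP ZQ Ziz Zjz r20.
exists (x, y); split => //; exists m => //=.
have := metric_triangle (iter m f x) z (iter m f y).
by rewrite (metric_sym _ z); lra.
Qed.

Lemma dense_apart_after r n :
  (forall i, (i < k)%N -> r < diam (Z i) / 2) -> dense (apart_after f r n).
Proof.
move=> rZ; apply: dense_cover_rectangles cover _ => i j P Q ik jk oP oQ ZP ZQ.
have [z [Ziz Zjz]] := meet _ _ ik jk.
have [c Zic rcz] := exists_far_point z (ex_intro _ z Ziz) (rZ i ik).
have eta0 : 0 < (mdist c z - r) / 2 by rewrite divr_gt0 // subr_gt0.
have [m nm [x [y [Px Qy cx zy]]]] :=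
  strongly_mixing_pair n (mix _ ik) (mix _ jk) oP oQ ZP ZQ Zic Zjz eta0.
exists (x, y); split => //; exists m => //=.
have := metric_triangle c (iter m f x) z.
have := metric_triangle (iter m f x) (iter m f y) z.
by rewrite (metric_sym (iter m f y) z); lra.
Qed.

End StronglyMixingCover.

Theorem lemma33 (R : realType) (X : metricType R) (f : X -> X)
  (k : nat) (Z : nat -> set X) :
  compact [set: X] ->
  continuous f ->
  (0 < k)%N ->
  (forall i, (i < k)%N -> closed (Z i)) ->
  (forall i, (i < k)%N -> f @` Z i `<=` Z i) ->
  [set: X] = \bigcup_(i in [set i | (i < k)%N]) Z i ->
  (forall i j, (i < k)%N -> (j < k)%N -> Z i `&` Z j !=set0) ->
  (forall i, (i < k)%N -> strongly_mixing_on f (Z i)) ->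
  forall eps : R, 0 < eps ->
    (forall i, (i < k)%N -> eps < diam (Z i) / 2) ->
    generically_chaotic f eps.
Proof.
move=> _ cf _ _ _ cover meet mix eps _ epsZ.
have [e epse eZ] := exists_between_finite epsZ.
pose U n := close_after f n.+1%:R^-1 n `&` apart_after f e n.
exists U; split => [n|[x y] xyU].
  split; first by apply: openI; [exact: open_close_after|exact: open_apart_after].
  apply: denseI; first exact: open_close_after.
    by apply: (dense_close_after cover meet mix); rewrite invr_gt0.
  exact: (dense_apart_after cover meet mix).
split; first by apply: limn_einf_orbit_dist_eq0 => n; have [] := xyU n I.
apply: (@lt_le_trans _ _ e%:E); first by rewrite lte_fin.
by apply: limn_esup_orbit_dist_ge => n; have [] := xyU n I.
Qed.
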